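(* Take the special vertex $v=0$. Let $I,J$ be non-crossing $m$-subsets of $\{1,\dots,n\}$ (equivalently $\operatorname{Ext}^1_A(M_I,M_J)=0$). Then $$c(I,J)=\kappa(M_J,M_I)-\kappa(M_I,M_J),$$ where $c(I,J)$ is the exponent in the quasi-commutation relation $\Delta_q^I\Delta_q^J=q^{c(I,J)}\Delta_q^J\Delta_q^I$ of quantum minors in the quantum Grassmannian.
   Context: Fix integers $1\le m<n$. $A$ is the quotient of the complete path algebra of the quiver with vertices $\mathbb{Z}_n$ and arrows $x_a\colon a-1\to a$, $y_a\colon a\to a-1$ ($a\in\{1,\dots,n\}$) by the relations $xy=yx$, $x^m=y^{n-m}$ at every vertex; centre $Z=\mathbb{C}[[t]]$; $\operatorname{CM}(A)$ is the category of finitely generated $A$-modules free over $Z$. For an $m$-subset $I$, $M_I$ has $e_jM_I=Z$ for all $j$, $x_a$ acting by $1$ if $a\in I$ and $t$ otherwise, $y_a$ acting by $t$ if $a\in I$ and $1$ otherwise. $\kappa(M,N)=\dim_{\mathbb{C}}\operatorname{coker}\big(\operatorname{Hom}_A(M,N)\to\operatorname{Hom}_Z(e_vM,e_vN)\big)$. Two $m$-subsets $I,J$ are non-crossing if either (i) $J\setminus I=J'\sqcup J''$ with $J'<(I\setminus J)<J''$, or (ii) $I\setminus J=I'\sqcup I''$ with $I'<(J\setminus I)<I''$ (where $X<Y$ means every element of $X$ is less than every element of $Y$); then $c(I,J)=|J''|-|J'|$ in case (i) and $c(I,J)=|I'|-|I''|$ in case (ii) (these agree if both hold). The quantum Grassmannian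 $\mathbb{C}_q[\operatorname{Gr}(m,n)]$ is the subalgebra of the quantum matrix algebra $\mathbb{C}_q[M_{m\times n}]$ generated by the quantum minors $\Delta_q^I=\sum_{\sigma\in S_m}(-q)^{\ell(\sigma)}x_{1,i_{\sigma(1)}}\cdots x_{m,i_{\sigma(m)}}$ ($I=\{i_1<\dots<i_m\}$), where $\mathbb{C}_q[M_{m\times n}]$ is generated over $\mathbb{C}[q^{\pm1}]$ by $x_{ij}$ with relations $x_{ij}x_{st}=qx_{st}x_{ij}$ if $i=s,j<t$ or $i<s,j=t$; $x_{ij}x_{st}=x_{st}x_{ij}$ if $i<s,j>t$; $x_{ij}x_{st}=x_{st}x_{ij}+(q-q^{-1})x_{sj}x_{it}$ if $i<s,j<t$. It is known (Leclerc–Zelevinsky) that for non-crossing $I,J$, $\Delta_q^I\Delta_q^J=q^{c(I,J)}\Delta_q^J\Delta_q^I$. *)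

(* C is modelled by algC (algebraic complex numbers). *)
From HB Require Import structures.
From mathcomp Require Import all_boot all_order all_algebra all_field.
Unset Printing Implicit Defensive.
Import Order.TTheory GRing.Theory Num.Theory.
Local Open Scope ring_scope.

(* Formal power series Z = C[[t]]: coefficient sequences. *)
Definition series := nat -> algC.
Definition s1 : series := fun k => (k == 0%N)%:R.
Definition st : series := fun k => (k == 1%N)%:R.
Definition smul (f g : series) : series :=
  fun k => \sum_(i < k.+1) f i * g (k - i)%N.

Definition lincomb (d : nat) (c : 'I_d -> algC) (b : 'I_d -> series) : series :=
  fun k => \sum_(i < d) c i * b i k.
Definition ssub (f g : series) : series := fun k => f k - g k.

(* dim_C (Z / S) = d, for a subset S of Z (here always a Z-submodule) *)
Definition coker_dim (S : series -> Prop) (d : nat) : Prop :=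
  exists b : 'I_d -> series,
    (forall c : 'I_d -> algC, S (lincomb d c b) -> forall i, c i = 0) /\
    (forall z : series, exists c : 'I_d -> algC, S (ssub z (lincomb d c b))).

(* The module M_I: e_j M_I = Z, x_a acts by 1 if a \in I else t,
   y_a acts by t if a \in I else 1  (a in {1..n}, subsets of 'I_n.+1 avoiding 0). *)
Definition xM (n : nat) (I : {set 'I_n.+1}) (a : nat) : series :=
  if (inord a : 'I_n.+1) \in I then s1 else st.
Definition yM (n : nat) (I : {set 'I_n.+1}) (a : nat) : series :=
  if (inord a : 'I_n.+1) \in I then st else s1.

(* A-module homomorphisms M_I -> M_J: a Z-linear map (multiplication by a power
   series f j) at each vertex j in Z_n (represented by 0..n-1), commuting with
   the arrows x_a : a-1 -> a and y_a : a -> a-1, a = 1..n (vertex n = vertex 0). *)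
Definition is_hom (n : nat) (I J : {set 'I_n.+1}) (f : nat -> series) : Prop :=
  forall a : nat, (1 <= a <= n)%N ->
    smul (f (a %% n)%N) (xM n I a) = smul (xM n J a) (f a.-1) /\
    smul (f a.-1) (yM n I a) = smul (yM n J a) (f (a %% n)%N).

(* image of Hom_A(M_I, M_J) -> Hom_Z(e_0 M_I, e_0 M_J) = Z *)
Definition hom_image (n : nat) (I J : {set 'I_n.+1}) : series -> Prop :=
  fun g => exists f, is_hom n I J f /\ f 0%N = g.

Definition kappa_is (n : nat) (I J : {set 'I_n.+1}) (d : nat) : Prop :=
  coker_dim (hom_image n I J) d.

Definition set_lt (n : nat) (X Y : {set 'I_n.+1}) : Prop :=
  forall x y, x \in X -> y \in Y -> (val x < val y)%N.

Definition noncrossing_c (n : nat) (I J : {set 'I_n.+1}) (k : int) : Prop :=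
  (exists J' J'' : {set 'I_n.+1},
     J' :|: J'' = J :\: I /\ [disjoint J' & J''] /\
     set_lt n J' (I :\: J) /\ set_lt n (I :\: J) J'' /\
     k = (#|J''|%:Z - #|J'|%:Z)) \/
  (exists I' I'' : {set 'I_n.+1},
     I' :|: I'' = I :\: J /\ [disjoint I' & I''] /\
     set_lt n I' (J :\: I) /\ set_lt n (J :\: I) I'' /\
     k = (#|I'|%:Z - #|I''|%:Z)).

From HB Require Import structures.
From mathcomp Require Import all_boot all_order all_algebra all_field zify.
From Stdlib Require Import FunctionalExtensionality.
Import Order.TTheory GRing.Theory Num.Theory.
Set Implicit Arguments. Unset Strict Implicit.
Local Open Scope ring_scope.

(* A homomorphism M_I -> M_J is a family of power series f_0, ..., f_(n-1),
   one per vertex.  For each arrow pair (x_a, y_a) the two commutation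
   conditions say exactly that f_a = t^(-e_a) f_(a-1) inside Z, where
   e_a = [a \in J] - [a \in I] (relation [shifted]).  Composing along the
   cycle, f_j = t^(-p(j)) f_0 with the profile p(j) = #(J \cap [1,j]) -
   #(I \cap [1,j]), which returns to 0 at j = n since #|I| = #|J|.  Hence the
   image of Hom_A(M_I, M_J) in Hom_Z(e_0 M_I, e_0 M_J) = Z is t^D Z with
   D = max_j p(j) (the bound D is attained as p(0) = 0), and kappa = D.
   Finally a counting argument computes these maxima for a non-crossing
   pair: in configuration (i), J \ I = J' \cup J'' with J' < I \ J < J'',
   kappa(M_I, M_J) = #|J'| and kappa(M_J, M_I) = #|J''|; configuration (ii)
   is the same statement with I and J exchanged. *)

Definition tmul (f : series) : series := fun k => if k is k'.+1 then f k' else 0.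

Lemma smul_f1 f : smul f s1 = f.
Proof.
apply: functional_extensionality => k; rewrite /smul big_ord_recr /= subnn /s1 /= mulr1.
by rewrite big1 ?add0r // => i _; rewrite subn_eq0 leqNgt ltn_ord /= mulr0.
Qed.

Lemma smul_1f f : smul s1 f = f.
Proof.
apply: functional_extensionality => k; rewrite /smul big_ord_recl /= subn0 /s1 /= mul1r.
by rewrite big1 ?addr0 // => i _; rewrite /bump /= mul0r.
Qed.

Lemma smul_ft f : smul f st = tmul f.
Proof.
apply: functional_extensionality => k; rewrite /smul /st /tmul.
case: k => [|k]; first by rewrite big_ord_recr big_ord0 /= mulr0 add0r.
rewrite big_ord_recr /= subnn /= mulr0 addr0 big_ord_recr /= subSnn /= mulr1.
rewrite big1 ?add0r // => i _.
have h : (k.+1 - i != 1)%N by have := ltn_ord i; lia.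
by rewrite (negbTE h) mulr0.
Qed.

Lemma smul_tf f : smul st f = tmul f.
Proof.
apply: functional_extensionality => k; rewrite /smul /st /tmul.
case: k => [|k]; first by rewrite big_ord_recr big_ord0 /= mul0r add0r.
rewrite big_ord_recl /= mul0r add0r big_ord_recl /= mul1r subSS subn0.
by rewrite big1 ?addr0 // => i _; rewrite /bump /= mul0r.
Qed.

Lemma tmul_inj : injective tmul.
Proof.
move=> u v h; apply: functional_extensionality => k.
exact: (congr1 (fun f => f k.+1) h).
Qed.

(* [shifted e u v]: v = t^(-e) u inside Z, i.e. v_j = u_(j+e) and no nonzero
   coefficient is shifted out of the range of exponents >= 0.  The arrow
   conditions of an A-module map are such relations, with e in {-1, 0, 1}. *)
Definition shifted (e : int) (u v : series) : Prop :=
  [/\ forall i j : nat, i%:Z - j%:Z = e -> u i = v j,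
      forall i : nat, i%:Z < e -> u i = 0
    & forall j : nat, j%:Z < - e -> v j = 0].

Lemma shifted_sym e u v : shifted e u v -> shifted (- e) v u.
Proof.
case=> h1 h2 h3; split.
- move=> i j hij; symmetry; apply: h1; lia.
- move=> i hi; apply: h3; lia.
- move=> j hj; apply: h2; lia.
Qed.

Lemma shifted_trans e1 e2 u v w :
  shifted e1 u v -> shifted e2 v w -> shifted (e1 + e2) u w.
Proof.
case=> a1 a2 a3 [b1 b2 b3]; split.
- move=> i j hij; case: (lerP 0 (i%:Z - e1)) => hm.
  + have -> : u i = v (absz (i%:Z - e1)) by apply: a1; lia.
    apply: b1; lia.
  + rewrite a2; last lia. rewrite b3 //; lia.
- move=> i hi; case: (lerP 0 (i%:Z - e1)) => hm.
  + have -> : u i = v (absz (i%:Z - e1)) by apply: a1; lia.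
    apply: b2; lia.
  + apply: a2; lia.
- move=> j hj; case: (lerP 0 (j%:Z + e2)) => hm.
  + have <- : v (absz (j%:Z + e2)) = w j by apply: (b1 _ j); lia.
    apply: a3; lia.
  + apply: b3; lia.
Qed.

Lemma shifted0 u v : shifted 0 u v <-> u = v.
Proof.
split=> [[h _ _]|->].
- apply: functional_extensionality => k; apply: h; lia.
- split=> [i j h|i h|i h]; [congr v; lia|lia|lia].
Qed.

Lemma shiftedN1 u v : shifted (-1) u v <-> v = tmul u.
Proof.
split=> [[h1 _ h3]|->].
- apply: functional_extensionality => -[|k] /=; first by apply: h3; lia.
  symmetry; apply: h1; lia.
- split=> [i j h|i h|j h]; last (have -> : j = 0%N by lia); last by [].
  + by have -> : j = i.+1 by lia.
  + lia.
Qed.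

Lemma shifted1 u v : shifted 1 u v <-> u = tmul v.
Proof.
split=> [/shifted_sym /shiftedN1 //|h].
by have /shiftedN1/shifted_sym := h; rewrite opprK.
Qed.

Lemma arrow_pair_shifted (bI bJ : bool) u v :
  (smul v (if bI then s1 else st) = smul (if bJ then s1 else st) u /\
   smul u (if bI then st else s1) = smul (if bJ then st else s1) v)
  <-> shifted ((bJ : nat)%:Z - (bI : nat)%:Z) u v.
Proof.
case: bI; case: bJ => /=; rewrite ?smul_f1 ?smul_1f ?smul_ft ?smul_tf.
- by rewrite subrr shifted0; split=> [[->]|->].
- by rewrite (_ : 0%:Z - 1 = -1) // shiftedN1; split=> [[]|->].
- by rewrite (_ : 1%:Z - 0 = 1) // shifted1; split=> [[->]|->].
- by rewrite subrr shifted0; split=> [[/tmul_inj ->]|->].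
Qed.

Section Counting.
Variable n : nat.
Implicit Types X Y : {set 'I_n.+1}.

Definition cnt X (j : nat) : nat := #|[set x in X | (val x <= j)%N]|.

Lemma cnt_step X a : (1 <= a <= n)%N ->
  cnt X a = (cnt X a.-1 + ((inord a : 'I_n.+1) \in X))%N.
Proof.
move=> ha; rewrite /cnt (cardsD1 (inord a)) addnC.
have va : val (inord a : 'I_n.+1) = a by rewrite /= inordK //; lia.
congr addn; last by rewrite inE va leqnn andbT.
apply: eq_card => x; rewrite !inE -(inj_eq val_inj) va.
by case: (x \in X); rewrite ?andbF //=; apply/idP/idP => /=; lia.
Qed.

Lemma cnt_all X j : (forall x, x \in X -> (val x <= j)%N) -> cnt X j = #|X|.
Proof.
move=> h; apply: eq_card => x; rewrite !inE.
by case hx: (x \in X); rewrite //= h.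
Qed.

Lemma cnt_none X j : (forall x, x \in X -> (j < val x)%N) -> cnt X j = 0%N.
Proof.
move=> h; apply/eqP; rewrite cards_eq0; apply/eqP/setP => x; rewrite !inE.
by case hx: (x \in X); rewrite //= leqNgt h.
Qed.

Lemma cnt0 X : ord0 \notin X -> cnt X 0 = 0%N.
Proof.
move=> h; apply: cnt_none => x hx; rewrite lt0n; apply: contraNneq h => hx0.
by rewrite -(_ : x = ord0) //; apply: val_inj.
Qed.

Lemma cnt_le X j : (cnt X j <= #|X|)%N.
Proof. by apply: subset_leq_card; apply/subsetP => x; rewrite inE => /andP[]. Qed.

Lemma cnt_pos X j : (0 < cnt X j)%N -> exists2 x, x \in X & (val x <= j)%N.
Proof. by rewrite card_gt0 => /set0Pn [x]; rewrite inE => /andP[]; exists x. Qed.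

Lemma cnt_U X Y j : [disjoint X & Y] -> cnt (X :|: Y) j = (cnt X j + cnt Y j)%N.
Proof.
move=> hd; rewrite /cnt -cardsUI.
have -> : [set x in X | (val x <= j)%N] :&: [set x in Y | (val x <= j)%N] = set0.
  apply/setP => x; rewrite !inE; move/disjoint_setI0/setP/(_ x): hd.
  by rewrite !inE; case: (x \in X); case: (x \in Y); rewrite //= andbF.
by rewrite cards0 addn0; apply: eq_card => x; rewrite !inE andb_orl.
Qed.

Lemma cnt_ID X Y j : cnt X j = (cnt (X :&: Y) j + cnt (X :\: Y) j)%N.
Proof.
rewrite -cnt_U ?setID //.
by rewrite -setI_eq0; apply/eqP/setP => x; rewrite !inE; case: (x \in Y); rewrite ?andbF.
Qed.

Lemma cnt_below X Y y j : set_lt n X Y -> y \in Y -> (val y <= j)%N ->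
  cnt X j = #|X|.
Proof. by move=> hXY hy hyj; apply: cnt_all => x hx; exact: ltnW (leq_trans (hXY x y hx hy) hyj). Qed.

Lemma exists_max X x0 : x0 \in X ->
  exists2 x, x \in X & forall y, y \in X -> (val y <= val x)%N.
Proof.
by move=> hx0; case: (arg_maxnP (fun i : 'I_n.+1 => val i) hx0) => x hx hm; exists x.
Qed.

(* The profile of the pair (I, J): j |-> #(J \cap [0,j]) - #(I \cap [0,j]).
   A homomorphism M_I -> M_J has component at vertex j equal to its
   component at vertex 0 multiplied by t^(-profile j). *)
Definition profile I J (j : nat) : int := (cnt J j)%:Z - (cnt I j)%:Z.

Definition kdim I J : nat := \max_(j < n.+1) (cnt J j - cnt I j).

Lemma profile_step I J a : (1 <= a <= n)%N ->
  profile I J a = profile I J a.-1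
    + (((inord a : 'I_n.+1) \in J) : nat)%:Z - (((inord a : 'I_n.+1) \in I) : nat)%:Z.
Proof. by move=> ha; rewrite /profile (cnt_step J ha) (cnt_step I ha) !PoszD; lia. Qed.

Lemma profile_le_kdim I J j : (j <= n)%N -> profile I J j <= (kdim I J)%:Z.
Proof.
move=> hj; have := leq_bigmax (F := fun j : 'I_n.+1 => (cnt J j - cnt I j)%N) (Ordinal (hj : (j < n.+1)%N)).
rewrite /profile /kdim /=; lia.
Qed.

End Counting.

Definition vanishes_below (D : nat) (g : series) : Prop :=
  forall k, (k < D)%N -> g k = 0.

(* The truncated shift t^(-e) g, an honest power series when e <= D and
   g \in t^D Z. *)
Definition tshift (e : int) (g : series) : series :=
  fun k => if 0 <= k%:Z + e then g (absz (k%:Z + e)) else 0.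

Lemma shifted_tshift e g (D : nat) :
  e <= D%:Z -> vanishes_below D g -> shifted e g (tshift e g).
Proof.
move=> he hg; split=> [i j hij|i hi|j hj]; rewrite /tshift.
- by rewrite ifT; [congr g|]; lia.
- apply: hg; lia.
- by rewrite ifF //; apply/negbTE; rewrite -ltNge; lia.
Qed.

(* A subset of Z that is exactly t^D Z has cokernel of dimension D,
   with basis 1, t, ..., t^(D-1). *)
Definition monomial d : 'I_d -> series := fun i k => (k == val i)%:R.

Lemma lincomb_monomial d (c : 'I_d -> algC) (i : 'I_d) :
  lincomb d c (@monomial d) (val i) = c i.
Proof.
rewrite /lincomb /monomial (bigD1 i) //= eqxx mulr1 big1 ?addr0 // => j hj.
by rewrite eq_sym (inj_eq val_inj) (negbTE hj) mulr0.
Qed.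

Lemma coker_dim_vanishes_below (S : series -> Prop) (D : nat) :
  (forall g, S g <-> vanishes_below D g) -> coker_dim S D.
Proof.
move=> hS; exists (@monomial D); split.
- move=> c /hS h i; rewrite -(lincomb_monomial c i); apply: h.
  exact: ltn_ord.
- move=> z; exists (fun i => z (val i)); apply/hS => k hk.
  by rewrite /ssub (lincomb_monomial (fun i : 'I_D => z (val i)) (Ordinal hk)) subrr.
Qed.

Section HomImage.
Variables (n : nat) (I J : {set 'I_n.+1}).
Hypotheses (hI0 : ord0 \notin I) (hJ0 : ord0 \notin J) (hIJ : #|I| = #|J|).

Definition arrow_shift (a : nat) : int :=
  (((inord a : 'I_n.+1) \in J) : nat)%:Z - (((inord a : 'I_n.+1) \in I) : nat)%:Z.

Lemma is_homE f : is_hom n I J f <->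
  forall a, (1 <= a <= n)%N -> shifted (arrow_shift a) (f a.-1) (f (a %% n)%N).
Proof.
by split=> h a /h; rewrite /xM /yM arrow_pair_shifted.
Qed.

(* The profile vanishes at both ends of the cycle, so it is periodic. *)
Lemma profile_mod a : (1 <= a <= n)%N -> profile I J (a %% n) = profile I J a.
Proof.
move=> ha; case: (ltngtP a n) => h; [by rewrite modn_small|lia|].
by rewrite h modnn /profile cnt0 // cnt0 // !cnt_all ?hIJ ?subrr // => x _;
  rewrite -ltnS ltn_ord.
Qed.

(* Integrating the arrow conditions along the path 0 -> 1 -> ... -> j. *)
Lemma hom_shifted f j : is_hom n I J f -> (j <= n)%N ->
  shifted (profile I J j) (f 0%N) (f (j %% n)%N).
Proof.
move/is_homE=> hf; elim: j => [|j IH] hj.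
  by rewrite /profile !cnt0 // mod0n; apply/shifted0.
have ha : (1 <= j.+1 <= n)%N by lia.
have := shifted_trans (IH (ltnW hj)) _; rewrite modn_small // => /(_ _ _ (hf _ ha)).
by rewrite (profile_step I J ha) addrA.
Qed.

Lemma hom_image_vanishes g : hom_image n I J g -> vanishes_below (kdim I J) g.
Proof.
case=> f [hf <-] k hk; apply/eqP; apply: contraLR hk => hgk; rewrite -leqNgt.
apply/bigmax_leqP => j _; rewrite leqNgt; apply: contra hgk => hjk.
have [_ h _] := hom_shifted hf (ltnSE (ltn_ord j)).
by apply/eqP/h; rewrite /profile; lia.
Qed.

(* Conversely g \in t^kdim Z extends to the homomorphism t^(-profile) g. *)
Lemma vanishes_hom_image g : vanishes_below (kdim I J) g -> hom_image n I J g.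
Proof.
move=> hg; exists (fun j => tshift (profile I J j) g); split; last first.
  rewrite /profile !cnt0 // subrr; symmetry; apply/shifted0.
  exact: (shifted_tshift _ hg).
apply/is_homE => a ha /=; rewrite (profile_mod ha).
have -> : arrow_shift a = - profile I J a.-1 + profile I J a.
  by rewrite (profile_step I J ha) addrA addKr.
apply: shifted_trans; last apply: shifted_tshift hg.
- apply: shifted_sym; apply: shifted_tshift hg.
  by apply: profile_le_kdim; lia.
- by apply: profile_le_kdim; lia.
Qed.

Lemma kappa_kdim : kappa_is n I J (kdim I J).
Proof.
apply: coker_dim_vanishes_below => g.
by split; [apply: hom_image_vanishes|apply: vanishes_hom_image].
Qed.

End HomImage.

Section NonCrossing.
Variable n : nat.
Implicit Types I J P Q : {set 'I_n.+1}.

(* Common elements cancel in the profile: only J \ I and I \ J matter. *)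
Lemma kdim_setD I J :
  kdim I J = \max_(j < n.+1) (cnt (J :\: I) j - cnt (I :\: J) j).
Proof.
apply: eq_bigr => j _; rewrite (cnt_ID J I) (cnt_ID I J) setIC.
by rewrite subnDl.
Qed.

Lemma card_disjointU P P' : [disjoint P & P'] -> #|P :|: P'| = (#|P| + #|P'|)%N.
Proof. by move=> hd; have := leq_card_setU P P'; rewrite hd => -[_ /eqP]. Qed.

Section Split.
Variables P1 P2 Q : {set 'I_n.+1}.
Hypotheses (hd : [disjoint P1 & P2]) (h1Q : set_lt n P1 Q) (hQ2 : set_lt n Q P2)
  (hcard : #|Q| = #|P1 :|: P2|).

Lemma max_excess_outer :
  \max_(j < n.+1) (cnt (P1 :|: P2) j - cnt Q j) = #|P1|.
Proof.
have hQ := hcard; rewrite card_disjointU // in hQ.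
apply/eqP; rewrite eqn_leq; apply/andP; split.
- apply/bigmax_leqP => j _; rewrite cnt_U //; have := cnt_le P1 j.
  case: (posnP (cnt P2 j)) => [->|/cnt_pos [y hy hyj]]; first lia.
  by rewrite (cnt_below hQ2 hy hyj); have := cnt_le P2 j; lia.
- case: (set_0Vmem P1) => [->|[x0 /exists_max [x hx hmax]]]; first by rewrite cards0.
  apply: leq_trans (leq_bigmax (F := fun j : 'I_n.+1 => _) x).
  rewrite cnt_U // (cnt_all hmax) (@cnt_none _ Q) => [|q hq]; last exact: h1Q.
  lia.
Qed.

Lemma max_excess_inner :
  \max_(j < n.+1) (cnt Q j - cnt (P1 :|: P2) j) = #|P2|.
Proof.
have hQ := hcard; rewrite card_disjointU // in hQ.
apply/eqP; rewrite eqn_leq; apply/andP; split.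
- apply/bigmax_leqP => j _; rewrite cnt_U //; have := cnt_le Q j.
  case: (posnP (cnt Q j)) => [->|/cnt_pos [y hy hyj]]; first lia.
  by rewrite (cnt_below h1Q hy hyj); lia.
- case: (set_0Vmem Q) => [hQ0|[x0 /exists_max [x hx hmax]]].
    by move: hQ; rewrite hQ0 cards0; lia.
  apply: leq_trans (leq_bigmax (F := fun j : 'I_n.+1 => _) x).
  rewrite cnt_U // (cnt_all hmax) (@cnt_none _ P2) => [|p hp]; last exact: hQ2.
  by have := cnt_le P1 x; lia.
Qed.

End Split.

Lemma kdim_noncrossing I J J1 J2 : #|I| = #|J| ->
  J1 :|: J2 = J :\: I -> [disjoint J1 & J2] ->
  set_lt n J1 (I :\: J) -> set_lt n (I :\: J) J2 ->
  kdim I J = #|J1| /\ kdim J I = #|J2|.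
Proof.
move=> hIJ hU hd h1 h2.
have hcard : #|I :\: J| = #|J1 :|: J2| by rewrite hU !cardsD setIC hIJ.
rewrite !kdim_setD -hU.
by split; [apply: max_excess_outer|apply: max_excess_inner].
Qed.

End NonCrossing.

Unset Implicit Arguments.

Theorem theorem6p5 (m n : nat) (hm : (1 <= m)%N) (hmn : (m < n)%N)
  (I J : {set 'I_n.+1})
  (hI0 : ord0 \notin I) (hJ0 : ord0 \notin J)
  (hI : #|I| = m) (hJ : #|J| = m)
  (k : int) (hc : noncrossing_c n I J k) :
  exists kIJ kJI : nat,
    kappa_is n I J kIJ /\ kappa_is n J I kJI /\ k = kJI%:Z - kIJ%:Z.
Proof.
have hIJ : #|I| = #|J| by rewrite hI hJ.
exists (kdim I J), (kdim J I); split; [|split].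
- exact: kappa_kdim.
- exact: kappa_kdim.
- case: hc => [[J1 [J2 [hU [hd [h1 [h2 ->]]]]]]|[I1 [I2 [hU [hd [h1 [h2 ->]]]]]]].
  + by have [-> ->] := kdim_noncrossing hIJ hU hd h1 h2.
  + by have [-> ->] := kdim_noncrossing (esym hIJ) hU hd h1 h2.
Qed.
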